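(* Let $g:\mathbb{Z}_{\ge 0}\to\mathbb{R}$ be a linearly progressing opponent process with switching time $\tau_0\ge1$ (so $g(0)>0$). Let $y_{\min}\in\mathbb{R}$, let $(y^{\mathrm{nat}}_t)_{t\ge0}$ be an arbitrary real sequence, and let gains $K_+,K_-$ satisfy $K_+\le g(0)^{-1}\le K_-$. Set $u_{-1}=0$, $y_0=y^{\mathrm{nat}}_0$, and for $t\ge0$ define $$u_t=\max\bigl\{0,\ u_{t-1}-K_+(y_t-y_{\min})_+-K_-(y_t-y_{\min})_-\bigr\},\qquad y_{t+1}=\sum_{k=0}^{t}g(k)\,u_{t-k}+y^{\mathrm{nat}}_{t+1},$$ where $(x)_+=\max(x,0)$ and $(x)_-=\min(x,0)$. Then for every $t\ge0$, $$y_{t+1}\ge y_{\min}+\bigl(y^{\mathrm{nat}}_{t+1}-y^{\mathrm{nat}}_t\bigr)-\sum_{k=1}^{t}g(k)\bigl(u_{t-k-1}-u_{t-k}\bigr).$$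
   Context: An impulse response $g:\mathbb{Z}_{\ge0}\to\mathbb{R}$ is an opponent process if there is a time $\tau_0$ with $g(\tau)>0$ for $\tau<\tau_0$ and $g(\tau)\le 0$ for $\tau\ge\tau_0$. It is a linearly progressing opponent process (LPOP) if in addition there is $\alpha\in[0,1)$ with $g(t+1)\le\alpha\,g(t)$ for all $t<\tau_0-1$ and $|g(t+1)|\ge\alpha\,|g(t)|$ for all $t\ge\tau_0$. *)

From mathcomp Require Import all_boot all_order all_algebra.
From mathcomp Require Import reals.
Set Implicit Arguments. Unset Strict Implicit. Unset Printing Implicit Defensive.
Import Order.TTheory GRing.Theory Num.Theory.
Local Open Scope ring_scope.

Definition opponent_process (R : realType) (g : nat -> R) (tau0 : nat) : Prop :=
  (forall tau : nat, (tau < tau0)%N -> 0 < g tau) /\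
  (forall tau : nat, (tau0 <= tau)%N -> g tau <= 0).

Definition LPOP (R : realType) (g : nat -> R) (tau0 : nat) : Prop :=
  opponent_process g tau0 /\
  exists alpha : R, 0 <= alpha /\ alpha < 1 /\
    (forall t : nat, (t.+1 < tau0)%N -> g t.+1 <= alpha * g t) /\
    (forall t : nat, (tau0 <= t)%N -> alpha * `|g t| <= `|g t.+1|).

Definition posp (R : realType) (x : R) : R := Num.max x 0.
Definition negp (R : realType) (x : R) : R := Num.min x 0.

(* extension of a sequence u_0, u_1, ... to integer indices by u_n = 0 for n < 0
   (in particular u_{-1} = 0) *)
Definition uext (R : realType) (u : nat -> R) (n : int) : R :=
  match n with Posz m => u m | Negz _ => 0 end.

(* Splitting off the k = 0 terms of the two convolutions, y_{t+1} - y_t is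
   g(0) (u_t - u_{t-1}) plus the tail sum and the change of the natural output.
   The gain condition K_+ <= 1/g(0) <= K_- gives y_t + g(0) (u_t - u_{t-1}) >= y_min:
   before clipping at 0, the update lowers u by at most (y_t - y_min)/g(0) when
   y_t >= y_min and raises it by at least (y_min - y_t)/g(0) otherwise. *)
From mathcomp Require Import all_boot all_order all_algebra.
From mathcomp Require Import reals.
From mathcomp Require Import lra zify.
Set Implicit Arguments. Unset Strict Implicit. Unset Printing Implicit Defensive.
Import Order.TTheory GRing.Theory Num.Theory.
Local Open Scope ring_scope.

Section Controller.

Variables (R : realType) (g0 Kp Km : R).
Hypotheses (g0_gt0 : 0 < g0) (Kp_le : Kp <= g0^-1) (Km_ge : g0^-1 <= Km).

Lemma mul_gain_le (e : R) : g0 * (Kp * posp e + Km * negp e) <= e.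
Proof.
have g0Kp : g0 * Kp <= 1 by rewrite -(mulfV (lt0r_neq0 g0_gt0)) ler_pM2l.
have g0Km : 1 <= g0 * Km by rewrite -(mulfV (lt0r_neq0 g0_gt0)) ler_pM2l.
rewrite /posp /negp; have [e_ge0 | e_lt0] := leP 0 e.
- rewrite mulr0 addr0 mulrA; nra.
- rewrite mulr0 add0r mulrA; nra.
Qed.

Lemma controller_step_ge (ymin x up u : R) :
  up - Kp * posp (x - ymin) - Km * negp (x - ymin) <= u ->
  ymin <= x + g0 * (u - up).
Proof.
move=> u_ge; have := mul_gain_le (x - ymin).
have : g0 * (up - Kp * posp (x - ymin) - Km * negp (x - ymin) - up)
       <= g0 * (u - up) by rewrite ler_pM2l // lerD2r.
lra.
Qed.

End Controller.

Lemma uext_neg (R : realType) (u : nat -> R) (n : int) : n < 0 -> uext u n = 0.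
Proof. by case: n. Qed.

Lemma uext_subn (R : realType) (u : nat -> R) (t k : nat) :
  (k <= t)%N -> uext u (t%:Z - k%:Z) = u (t - k)%N.
Proof. by move=> /subzn ->. Qed.

Section Convolution.

Variables (R : realType) (g u y ynat : nat -> R).
Hypothesis y0E : y 0%N = ynat 0%N.
Hypothesis ySE :
  forall t : nat, y t.+1 = \sum_(0 <= k < t.+1) g k * u (t - k)%N + ynat t.+1.

Lemma output_succE (t : nat) :
  y t.+1 = \sum_(0 <= k < t.+1) g k * uext u (t%:Z - k%:Z) + ynat t.+1.
Proof.
rewrite ySE; congr (_ + _); apply: eq_big_nat => k /andP[_ k_le].
by rewrite uext_subn.
Qed.

Lemma outputE (t : nat) :
  y t = \sum_(0 <= k < t.+1) g k * uext u (t%:Z - k%:Z - 1) + ynat t.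
Proof.
case: t => [|t]; first by rewrite big_nat1 /= mulr0 add0r.
have uext_last : uext u (t.+1%:Z - t.+1%:Z - 1) = 0 by apply: uext_neg; lia.
rewrite output_succE [in RHS]big_nat_recr //= uext_last mulr0 addr0.
by congr (_ + _); apply: eq_big_nat => k _; congr (_ * uext u _); lia.
Qed.

End Convolution.

Theorem lemma1 (R : realType) (g : nat -> R) (tau0 : nat)
  (ymin : R) (ynat : nat -> R) (Kp Km : R) (u y : nat -> R) :
  LPOP g tau0 -> (1 <= tau0)%N ->
  Kp <= (g 0%N)^-1 -> (g 0%N)^-1 <= Km ->
  y 0%N = ynat 0%N ->
  (forall t : nat, u t = Num.max 0 (uext u (t%:Z - 1)
        - Kp * posp (y t - ymin) - Km * negp (y t - ymin))) ->
  (forall t : nat, y t.+1 = \sum_(0 <= k < t.+1) g k * u (t - k)%N + ynat t.+1) ->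
  forall t : nat,
    ymin + (ynat t.+1 - ynat t)
      - \sum_(1 <= k < t.+1) g k * (uext u (t%:Z - k%:Z - 1) - uext u (t%:Z - k%:Z))
    <= y t.+1.
Proof.
move=> [[g_pos _] _] tau0_ge1 Kp_le Km_ge y0E uE ySE t.
have u_ge : uext u (t%:Z - 1) - Kp * posp (y t - ymin) - Km * negp (y t - ymin)
    <= u t by rewrite [u t]uE le_max lexx orbT.
under eq_bigr do rewrite mulrBr.
rewrite sumrB.
have := controller_step_ge (g_pos 0%N tau0_ge1) Kp_le Km_ge u_ge.
rewrite (outputE y0E ySE) (output_succE ySE) !(big_ltn (ltn0Sn t)) /= subr0 addn0.
lra.
Qed.
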